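(* Let $n,p\ge1$ be integers and let $\mathbf{A}^{p+1}_{n+1}$ be as defined in the context. The implicative filters of $\mathbf{A}^{p+1}_{n+1}$ different from $A$ are exactly the three sets $\{\top\}$, $f_\omega=\{\langle(n,r),p\rangle: r\le0\}$, and ${\uparrow}\langle(0,0),p\rangle=\{a\in A: a\ge\langle(0,0),p\rangle\}$ (and $\{\top\}\subsetneq f_\omega\subsetneq{\uparrow}\langle(0,0),p\rangle$).
   Context: Order $\mathbb{Z}\times\mathbb{Z}$ lexicographically: $(m,r)\preccurlyeq(k,s)$ iff $m<k$, or $m=k$ and $r\le s$; addition/subtraction of pairs is componentwise, and $\min,\max$ of pairs refer to $\preccurlyeq$. For an integer $n\ge1$ let $L^\omega_{n+1}=\{(m,r)\in\mathbb{Z}^2:(0,0)\preccurlyeq(m,r)\preccurlyeq(n,0)\}$ with $x\ast y=\max\{(0,0),x+y-(n,0)\}$ and $x\to y=\min\{(n,0),(n,0)-x+y\}$. For an integer $p\ge1$ let $L_{p+1}=\{0,1,\dots,p\}$ with $\alpha\ast\beta=\max\{0,\alpha+\beta-p\}$. Define $$A=A^{p+1}_{n+1}=\{\langle(m,r),\alpha\rangle:(m,r)\in L^\omega_{n+1},\ \alpha\in\{0,p\}\}\cup\{\langle(m,r),\alpha\rangle:(0,0)\preccurlyeq(m,r)\preccurlyeq(n-1,0),\ 0<\alpha<p\}.$$ Order: $\langle(m,r),\alpha\rangle\le\langle(k,s),\beta\rangle$ iff one of: (o1) $\alpha\neq0$, $\alpha\le\beta$ and $(m,r)\preccurlyeq(k,s)$;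 (o2) $\alpha=\beta=0$ and $(k,s)\preccurlyeq(m,r)$; (o3) $\alpha=0$, $\beta\ne0$ and $(n-1,0)\preccurlyeq(m+k,r+s)$. $\wedge,\vee$ denote meet and join for $\le$. Put $\bot=\langle(n,0),0\rangle$, $\top=\langle(n,0),p\rangle$. For $a=\langle(m,r),\alpha\rangle$, $b=\langle(k,s),\beta\rangle\in A$ define $a\odot b$ by: (P1) if $\alpha,\beta\ge1$ and $\alpha+\beta>p$: $a\odot b=\langle(m,r)\ast(k,s),\alpha+\beta-p\rangle$; (P2) if $\alpha,\beta\ge1$ and $\alpha+\beta\le p$: $a\odot b=\langle\min\{(n,0),(2n-(m+k+1),-(r+s))\},0\rangle$; (P3) if $\alpha\ge1$, $\beta=0$: $a\odot b=\langle(m,r)\to(k,s),0\rangle$, and if $\alpha=0$, $\beta\ge1$: $a\odot b=\langle(k,s)\to(m,r),0\rangle$; (P4) if $\alpha=\beta=0$: $a\odot b=\langle\min\{(n,0),(m+k+1,r+s)\},0\rangle$. Define $\sim\langle(m,r),\alpha\rangle=\langle(m,r),p-\alpha\rangle$ if $\alpha\in\{0,p\}$, and $\sim\langle(m,r),\alpha\rangle=\langle(n-1-m,-r),p-\alpha\rangle$ if $0<\alpha<p$. Define $a\Rightarrow b=\sim(a\odot\sim b)$. The algebra $\mathbf{A}^{p+1}_{n+1}$ is $\langle A;\odot,\Rightarrow,\wedge,\vee,\bot,\top\rangle$. An implicative filter of $\mathbf{A}^{p+1}_{n+1}$ is a subset $F\subseteq A$ with $\top\in F$, closed under $\odot$,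 and upward closed w.r.t. $\le$. *)

From Stdlib Require Import ZArith Bool.
Open Scope Z_scope.

Definition pair := (Z * Z)%type.

Definition lexle (x y : pair) : Prop :=
  fst x < fst y \/ (fst x = fst y /\ snd x <= snd y).

Definition lexleb (x y : pair) : bool :=
  (fst x <? fst y) || ((fst x =? fst y) && (snd x <=? snd y)).

Definition pmin (x y : pair) : pair := if lexleb x y then x else y.
Definition pmax (x y : pair) : pair := if lexleb x y then y else x.
Definition padd (x y : pair) : pair := (fst x + fst y, snd x + snd y).
Definition psub (x y : pair) : pair := (fst x - fst y, snd x - snd y).

Definition inLw (n : Z) (x : pair) : Prop := lexle (0, 0) x /\ lexle x (n, 0).
Definition starw (n : Z) (x y : pair) : pair := pmax (0, 0) (psub (padd x y) (n, 0)).
Definition implw (n : Z) (x y : pair) : pair := pmin (n, 0) (padd (psub (n, 0) x) y).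

(* Elements <(m,r), alpha> of A^{p+1}_{n+1}, encoded as (pair, alpha). *)
Definition elt := (pair * Z)%type.

Definition inA (n p : Z) (a : elt) : Prop :=
  let (x, al) := a in
  (inLw n x /\ (al = 0 \/ al = p)) \/
  (lexle (0, 0) x /\ lexle x (n - 1, 0) /\ 0 < al < p).

Definition leA (n : Z) (a b : elt) : Prop :=
  let (x, al) := a in let (y, be) := b in
  (al <> 0 /\ al <= be /\ lexle x y) \/
  (al = 0 /\ be = 0 /\ lexle y x) \/
  (al = 0 /\ be <> 0 /\ lexle (n - 1, 0) (padd x y)).

Definition botA (n : Z) : elt := ((n, 0), 0).
Definition topA (n p : Z) : elt := ((n, 0), p).

Definition odotA (n p : Z) (a b : elt) : elt :=
  let (x, al) := a in let (y, be) := b in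
  if (1 <=? al) && (1 <=? be) then
    if p <? al + be then (starw n x y, al + be - p)
    else (pmin (n, 0) (2 * n - (fst x + fst y + 1), - (snd x + snd y)), 0)
  else if (1 <=? al) then (implw n x y, 0)
  else if (1 <=? be) then (implw n y x, 0)
  else (pmin (n, 0) (fst x + fst y + 1, snd x + snd y), 0).

Definition subsetA (n p : Z) (F : elt -> Prop) : Prop :=
  forall a, F a -> inA n p a.

Definition implicative_filter (n p : Z) (F : elt -> Prop) : Prop :=
  F (topA n p) /\
  (forall a b, F a -> F b -> F (odotA n p a b)) /\
  (forall a b, F a -> inA n p b -> leA n a b -> F b).

Definition set_eq (F G : elt -> Prop) : Prop := forall a, F a <-> G a.
Definition set_sub (F G : elt -> Prop) : Prop := forall a, F a -> G a.
Definition set_ssub (F G : elt -> Prop) : Prop := set_sub F G /\ ~ set_eq F G.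

Definition top_set (n p : Z) : elt -> Prop := fun a => a = topA n p.
Definition f_omega (n p : Z) : elt -> Prop :=
  fun a => exists r, r <= 0 /\ a = ((n, r), p).
Definition up00p (n p : Z) : elt -> Prop :=
  fun a => inA n p a /\ leA n ((0, 0), p) a.

(* A filter is all of A as soon as it contains the bottom (n,0),0, and every element whose
   second coordinate is below p generates the bottom: elements with alpha = 0 climb to it
   through (P4), and an element with 0 < alpha < p first collapses to alpha = 0 through
   (P1)/(P2).  Hence a proper filter lives in the copy of L^omega_{n+1} at level p, where
   the product is the truncated sum starw.  If it contains a pair (m,r) with m < n, it
   contains (n-1,|r|), whose n-th power has first coordinate 0 and whose (n+1)-th power is
   truncated to (0,0); so the filter is the upset of (0,0),p.
   Otherwise it consists of pairs (n,r) with r <= 0, and a single r < 0 yields every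
   (n,s) with s <= 0 through the powers (n,k r). *)
From Stdlib Require Import ZArith Lia Classical.
Open Scope Z_scope.

Ltac unfold_A :=
  unfold up00p, f_omega, top_set, inA, leA, inLw, lexle, padd, psub, topA, botA in *;
  cbn [fst snd] in *.

Lemma lexleb_lexle x y : lexleb x y = true <-> lexle x y.
Proof.
  destruct x, y; unfold lexleb, lexle; cbn [fst snd].
  rewrite Bool.orb_true_iff, Bool.andb_true_iff, Z.ltb_lt, Z.eqb_eq, Z.leb_le.
  tauto.
Qed.

Lemma lexle_antisym x y : lexle x y -> lexle y x -> x = y.
Proof. destruct x, y; unfold lexle; cbn [fst snd]; intros; f_equal; lia. Qed.

Lemma pmax_l x y : lexle y x -> pmax x y = x.
Proof.
  unfold pmax; intros Hyx; destruct (lexleb x y) eqn:Exy; [|reflexivity].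
  apply lexle_antisym; [assumption|now apply lexleb_lexle].
Qed.

Lemma pmax_r x y : lexle x y -> pmax x y = y.
Proof. now unfold pmax; intros Hxy%lexleb_lexle; rewrite Hxy. Qed.

Lemma pmin_r x y : lexle y x -> pmin x y = y.
Proof.
  unfold pmin; intros Hyx; destruct (lexleb x y) eqn:Exy; [|reflexivity].
  apply lexle_antisym; [now apply lexleb_lexle|assumption].
Qed.

Lemma pmax_ge_l x y : lexle x (pmax x y).
Proof.
  unfold pmax; destruct (lexleb x y) eqn:Exy; [now apply lexleb_lexle|].
  destruct x; unfold lexle; lia.
Qed.

Lemma pmax_le x y z : lexle x z -> lexle y z -> lexle (pmax x y) z.
Proof. unfold pmax; destruct (lexleb x y); auto. Qed.

Lemma pmin_ge x y z : lexle z x -> lexle z y -> lexle z (pmin x y).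
Proof. unfold pmin; destruct (lexleb x y); auto. Qed.

Lemma starw_exact n x y : lexle (n, 0) (padd x y) -> starw n x y = psub (padd x y) (n, 0).
Proof.
  intros Hn; apply pmax_r; destruct x, y; unfold lexle, padd, psub in *; cbn [fst snd] in *; lia.
Qed.

Lemma odotA_P1 n p x al y be : 1 <= al -> 1 <= be -> p < al + be ->
  odotA n p (x, al) (y, be) = (starw n x y, al + be - p).
Proof.
  intros Hal Hbe Hp; unfold odotA.
  now rewrite (proj2 (Z.leb_le 1 al) Hal), (proj2 (Z.leb_le 1 be) Hbe),
    (proj2 (Z.ltb_lt p _) Hp).
Qed.

Lemma odotA_P2 n p x al y be : 1 <= al -> 1 <= be -> al + be <= p ->
  odotA n p (x, al) (y, be) =
  (pmin (n, 0) (2 * n - (fst x + fst y + 1), - (snd x + snd y)), 0).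
Proof.
  intros Hal Hbe Hp; unfold odotA.
  rewrite (proj2 (Z.leb_le 1 al) Hal), (proj2 (Z.leb_le 1 be) Hbe); cbn.
  now destruct (Z.ltb_spec p (al + be)); [lia|].
Qed.

Lemma odotA_P4 n p x y :
  odotA n p (x, 0) (y, 0) = (pmin (n, 0) (fst x + fst y + 1, snd x + snd y), 0).
Proof. reflexivity. Qed.

Lemma odotA_top_level n p x y : 1 <= p ->
  odotA n p (x, p) (y, p) = (starw n x y, p).
Proof. intros hp; rewrite odotA_P1 by lia; f_equal; lia. Qed.

Lemma botA_le n p a : 1 <= n -> inA n p a -> leA n (botA n) a.
Proof. destruct a as [[m r] al]; intros; unfold_A; lia. Qed.

Lemma implicative_filter_ext n p F G :
  set_eq F G -> implicative_filter n p G -> implicative_filter n p F.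
Proof.
  intros EFG [Gtop [Gmul Gup]]; split; [|split].
  - now apply EFG.
  - intros a b Fa%EFG Fb%EFG; now apply EFG, Gmul.
  - intros a b Fa%EFG Ab Hab; now apply EFG, (Gup a).
Qed.

Section Filter.

Variables n p : Z.
Hypothesis hn : 1 <= n.
Hypothesis hp : 1 <= p.
Variable F : elt -> Prop.
Hypothesis F_sub : subsetA n p F.
Hypothesis F_filter : implicative_filter n p F.

Let F_top : F (topA n p) := proj1 F_filter.
Let F_mul : forall a b, F a -> F b -> F (odotA n p a b) := proj1 (proj2 F_filter).
Let F_up : forall a b, F a -> inA n p b -> leA n a b -> F b := proj2 (proj2 F_filter).

Lemma filter_eq_A_iff_bot : set_eq F (inA n p) <-> F (botA n).
Proof.
  split.
  - intros EFA; apply EFA; unfold_A; lia.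
  - intros Fbot a; split; [apply F_sub|].
    intros Aa; exact (F_up _ _ Fbot Aa (botA_le n p a hn Aa)).
Qed.

Lemma filter_bot_of_level0 x : F (x, 0) -> lexle (0, 0) x -> F (botA n).
Proof.
  intros Fx Hx.
  assert (F00 : F ((0, 0), 0)).
  { apply (F_up _ _ Fx); destruct x; unfold_A; lia. }
  assert (Fk : forall k, 0 <= k -> k <= n -> F ((k, 0), 0)).
  { apply (natlike_ind (fun k => k <= n -> F ((k, 0), 0))); [intros; exact F00|].
    intros k Hk IHk Hkn.
    pose proof (F_mul _ _ (IHk ltac:(lia)) F00) as Fsucc.
    rewrite odotA_P4, pmin_r in Fsucc by (unfold lexle; cbn [fst snd]; lia).
    cbn [fst snd] in Fsucc; now rewrite !Z.add_0_r in Fsucc. }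
  apply Fk; lia.
Qed.

Lemma filter_bot_of_level_mid x al :
  F (x, al) -> 0 < al < p -> lexle x (n - 1, 0) -> F (botA n).
Proof.
  intros Fx Hal Hx.
  (* (n-1,0) at level k times level p-1 drops to level k-1; at level 1 its square is at level 0. *)
  assert (Fk : forall k, 0 <= k -> 1 <= k <= p - 1 -> F ((n - 1, 0), k) -> F (botA n)).
  { apply (natlike_ind (fun k => 1 <= k <= p - 1 -> F ((n - 1, 0), k) -> F (botA n)));
      [lia|]; intros k Hk IHk Hk1 Fk.
    destruct (Z.eq_dec k 0) as [->|Hk0].
    - pose proof (F_mul _ _ Fk Fk) as Fsq; rewrite odotA_P2 in Fsq by lia.
      apply (filter_bot_of_level0 _ Fsq), pmin_ge; unfold lexle; cbn [fst snd]; lia.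
    - assert (Fpred : F ((n - 1, 0), p - 1)) by (apply (F_up _ _ Fk); unfold_A; lia).
      apply IHk; [lia|].
      pose proof (F_mul _ _ Fk Fpred) as Fprod; rewrite odotA_P1 in Fprod by lia.
      apply (F_up _ _ Fprod); [unfold_A; lia|].
      left; split; [lia|split; [lia|]].
      apply pmax_le; unfold lexle, padd, psub; cbn [fst snd]; lia. }
  apply (Fk (p - 1)); [lia|lia|].
  apply (F_up _ _ Fx); destruct x; unfold_A; lia.
Qed.

Lemma proper_filter_top_level a :
  ~ F (botA n) -> F a -> exists x, a = (x, p) /\ inLw n x.
Proof.
  intros Fnbot Fa; destruct a as [x al].
  destruct (F_sub _ Fa) as [[Hx [-> | ->]] | [Hx0 [Hx1 Hal]]].
  - contradiction (Fnbot (filter_bot_of_level0 x Fa (proj1 Hx))).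
  - eauto.
  - contradiction (Fnbot (filter_bot_of_level_mid x al Fa Hal Hx1)).
Qed.

(* The k-th power of (n-d,r),p at level p, valid while the truncation in starw is inactive. *)
Lemma filter_pow d r : 0 <= d -> F ((n - d, r), p) ->
  forall k, 1 <= k -> lexle (0, 0) (n - k * d, k * r) -> F ((n - k * d, k * r), p).
Proof.
  intros Hd Fdr k Hk.
  pattern k; revert k Hk; apply Zlt_lower_bound_ind.
  intros k IHk Hk Hkpos.
  destruct (Z.eq_dec k 1) as [->|Hk1]; [now rewrite !Z.mul_1_l|].
  assert (Fpred : F ((n - (k - 1) * d, (k - 1) * r), p)).
  { apply IHk; [lia|]; unfold lexle in *; cbn [fst snd] in *; nia. }
  pose proof (F_mul _ _ Fpred Fdr) as Fprod.
  rewrite odotA_top_level, starw_exact in Fprod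
    by (auto; unfold lexle, padd in *; cbn [fst snd] in *; nia).
  unfold padd, psub in Fprod; cbn [fst snd] in Fprod.
  now replace (n - k * d, k * r) with (n - (k - 1) * d + (n - d) - n, (k - 1) * r + r - 0)
    by (f_equal; ring).
Qed.

Lemma filter_base_of_low m r :
  F ((m, r), p) -> lexle (0, 0) (m, r) -> m < n -> F ((0, 0), p).
Proof.
  intros Fmr Hmr Hm.
  assert (F1 : F ((n - 1, Z.abs r), p)) by (apply (F_up _ _ Fmr); unfold_A; lia).
  assert (Fn : F ((n - n * 1, n * Z.abs r), p)).
  { apply (filter_pow 1 (Z.abs r)); auto; [lia|unfold lexle; cbn [fst snd]; lia]. }
  pose proof (F_mul _ _ Fn F1) as Fprod.
  rewrite odotA_top_level in Fprod by assumption; unfold starw in Fprod.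
  rewrite pmax_l in Fprod by (unfold lexle, padd, psub; cbn [fst snd]; lia).
  exact Fprod.
Qed.

Lemma filter_f_omega_of_neg r : F ((n, r), p) -> r < 0 -> set_sub (f_omega n p) F.
Proof.
  intros Fr Hr a [s [Hs ->]].
  destruct (Z.eq_dec s 0) as [->|Hs0]; [exact F_top|].
  assert (Fpow : F ((n - (- s) * 0, (- s) * r), p)).
  { apply filter_pow; [lia|now rewrite Z.sub_0_r|lia|unfold lexle; cbn [fst snd]; lia]. }
  apply (F_up _ _ Fpow); unfold_A; nia.
Qed.

Lemma proper_filter_cases :
  ~ F (botA n) -> set_eq F (top_set n p) \/ set_eq F (f_omega n p) \/ set_eq F (up00p n p).
Proof.
  intros Fnbot.
  destruct (classic (exists m r, F ((m, r), p) /\ m < n)) as [[m [r [Fmr Hm]]]|Hnolow].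
  - destruct (proper_filter_top_level _ Fnbot Fmr) as [x [[= <-] Hmr]].
    pose proof (filter_base_of_low m r Fmr (proj1 Hmr) Hm) as Fbase.
    right; right; intros a; split.
    + intros Fa; split; [now apply F_sub|].
      destruct (proper_filter_top_level a Fnbot Fa) as [[k s] [-> Hks]]; unfold_A; lia.
    + intros [Aa Ha]; exact (F_up _ _ Fbase Aa Ha).
  - assert (Fsub : set_sub F (f_omega n p)).
    { intros a Fa; destruct (proper_filter_top_level a Fnbot Fa) as [[k s] [-> Hks]].
      destruct (Z.eq_dec k n) as [->|Hk].
      + exists s; split; [unfold_A; lia|reflexivity].
      + contradiction Hnolow; exists k, s; split; [assumption|unfold_A; lia]. }
    destruct (classic (exists r, F ((n, r), p) /\ r < 0)) as [[r [Fr Hr]]|Hnoneg].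
    + right; left; intros a; split; [apply Fsub|apply (filter_f_omega_of_neg r Fr Hr)].
    + left; intros a; split; [|now intros ->].
      intros Fa; destruct (Fsub a Fa) as [s [Hs ->]].
      destruct (Z.eq_dec s 0) as [->|Hs0]; [reflexivity|].
      contradiction Hnoneg; exists s; split; [assumption|lia].
Qed.

End Filter.

Lemma top_set_filter n p : 0 <= n -> 1 <= p -> implicative_filter n p (top_set n p).
Proof.
  intros hn hp; split; [|split]; unfold top_set.
  - reflexivity.
  - intros a b -> ->; unfold topA.
    rewrite odotA_top_level, starw_exact by (auto; unfold lexle, padd; cbn [fst snd]; lia).
    unfold padd, psub; cbn [fst snd]; do 2 f_equal; lia.
  - intros a [[m r] be] -> Ab Hab; unfold_A; do 2 f_equal; lia.
Qed.

Lemma f_omega_filter n p : 1 <= n -> 1 <= p -> implicative_filter n p (f_omega n p).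
Proof.
  intros hn hp; split; [|split]; unfold f_omega.
  - now exists 0.
  - intros a b [r [Hr ->]] [s [Hs ->]].
    rewrite odotA_top_level, starw_exact by (auto; unfold lexle, padd; cbn [fst snd]; lia).
    exists (r + s); split; [lia|]; unfold padd, psub; cbn [fst snd]; do 2 f_equal; lia.
  - intros a [[m s] be] [r [Hr ->]] Ab Hab; unfold_A.
    exists s; split; [lia|]; do 2 f_equal; lia.
Qed.

Lemma up00p_filter n p : 0 <= n -> 1 <= p -> implicative_filter n p (up00p n p).
Proof.
  intros hn hp; split; [|split].
  - unfold_A; lia.
  - intros [x al] [y be] Ha Hb.
    assert (Hx : al = p /\ inLw n x) by (destruct x; unfold_A; lia).
    assert (Hy : be = p /\ inLw n y) by (destruct y; unfold_A; lia).
    destruct Hx as [-> Hx], Hy as [-> Hy].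
    rewrite odotA_top_level by assumption.
    assert (Hlow : lexle (0, 0) (starw n x y)) by apply pmax_ge_l.
    assert (Hhigh : lexle (starw n x y) (n, 0)).
    { apply pmax_le; [unfold lexle; cbn [fst snd]; lia|].
      destruct x, y; unfold inLw, lexle, psub, padd in *; cbn [fst snd] in *; lia. }
    destruct (starw n x y); unfold_A; lia.
  - intros [[m r] al] [[k s] be] Ha Hb Hab; unfold_A; lia.
Qed.

Theorem lemma3p2 (n p : Z) (hn : 1 <= n) (hp : 1 <= p) :
  (forall F : elt -> Prop, subsetA n p F ->
     (implicative_filter n p F /\ ~ set_eq F (inA n p)) <->
     (set_eq F (top_set n p) \/ set_eq F (f_omega n p) \/ set_eq F (up00p n p)))
  /\ set_ssub (top_set n p) (f_omega n p)
  /\ set_ssub (f_omega n p) (up00p n p).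
Proof.
  split; [|split].
  - intros F F_sub; split.
    + intros [F_filter F_proper].
      rewrite (filter_eq_A_iff_bot n p hn F F_sub F_filter) in F_proper.
      exact (proper_filter_cases n p hn hp F F_sub F_filter F_proper).
    + intros HF.
      assert (F_filter : implicative_filter n p F).
      { destruct HF as [E|[E|E]]; apply (implicative_filter_ext _ _ _ _ E).
        - apply top_set_filter; lia.
        - apply f_omega_filter; lia.
        - apply up00p_filter; lia. }
      split; [exact F_filter|].
      rewrite (filter_eq_A_iff_bot n p hn F F_sub F_filter).
      intros Fbot; destruct HF as [E|[E|E]]; apply E in Fbot; unfold_A.
      * injection Fbot; lia.
      * destruct Fbot as [r [_ Hr]]; injection Hr; lia.
      * lia.
  - split; [intros a ->; now exists 0|].
    intros E; assert (Htop : top_set n p ((n, -1), p)) by (apply E; now exists (-1)).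
    unfold top_set, topA in Htop; injection Htop; lia.
  - split; [intros a [r [Hr ->]]; unfold_A; lia|].
    intros E; assert (Hbase : f_omega n p ((0, 0), p)) by (apply E; unfold_A; lia).
    destruct Hbase as [r [_ Hr]]; injection Hr; lia.
Qed.
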